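(* Let $M$ be the blow-up of $\mathbb{CP}_2$ at two distinct points (so $c_1^2=7$), with Kähler cone $\mathcal K\subset H^2(M,\mathbb R)$. Let $\check{\mathcal K}=\mathcal K/\mathbb R^+$ be its quotient under positive scalar multiplication. For $t\in\mathbb R$, let $\mathbf Y_t\subset\check{\mathcal K}$ be the set of classes with $\mathcal T(\Omega)=(c_1\cdot\Omega)^2/\Omega^2\le t$; note that $\mathcal T$ is homogeneous of degree $0$ and so descends to $\check{\mathcal K}$. If $7<t<8$, then $\mathbf Y_t$ is homeomorphic to the closed unit $2$-disk; in particular, it is compact.
   Context: The Kähler cone is the set of cohomology classes of Kähler forms compatible with the complex structure. Products of classes denote the intersection pairing. *)

From Stdlib Require Import Reals.
Open Scope R_scope.

(* H^2(M,R) for M = Bl_2 CP^2, in the basis (H, E1, E2):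
   the triple (x0,x1,x2) denotes the class x0*H + x1*E1 + x2*E2. *)
Definition cls : Type := (R * R * R)%type.

(* Intersection pairing: H^2 = 1, E1^2 = E2^2 = -1, all other products 0. *)
Definition dot (u v : cls) : R :=
  let '(a, b, c) := u in let '(a', b', c') := v in a * a' - b * b' - c * c'.

Definition scale (l : R) (u : cls) : cls :=
  let '(a, b, c) := u in (l * a, l * b, l * c).

Definition c1 : cls := (3, -1, -1).

(* Classes of the three (-1)-curves E1, E2, H - E1 - E2. *)
Definition E1 : cls := (0, 1, 0).
Definition E2 : cls := (0, 0, 1).
Definition Lline : cls := (1, -1, -1).

(* Kähler cone of Bl_2 CP^2 (a del Pezzo surface of degree 7): the classes
   positive on the generators E1, E2, H-E1-E2 of the Mori cone. *)
Definition kahler (w : cls) : Prop :=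
  0 < dot w E1 /\ 0 < dot w E2 /\ 0 < dot w Lline.

Definition Tfun (w : cls) : R := (dot c1 w) ^ 2 / dot w w.

(* Preimage in K of Y_t: the cone of Kähler classes with T <= t. *)
Definition Ycone (t : R) (w : cls) : Prop := kahler w /\ Tfun w <= t.

Definition dist3 (u v : cls) : R :=
  let '(a, b, c) := u in let '(a', b', c') := v in
  sqrt ((a - a') ^ 2 + (b - b') ^ 2 + (c - c') ^ 2).
Definition dist2 (p q : R * R) : R :=
  let '(x, y) := p in let '(x', y') := q in sqrt ((x - x') ^ 2 + (y - y') ^ 2).

Definition disk (p : R * R) : Prop := let '(x, y) := p in x ^ 2 + y ^ 2 <= 1.

Definition cont_on3 (S : cls -> Prop) (f : cls -> R * R) : Prop :=
  forall x, S x -> forall eps, 0 < eps -> exists delta, 0 < delta /\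
    forall y, S y -> dist3 x y < delta -> dist2 (f x) (f y) < eps.
Definition cont_on2 (S : R * R -> Prop) (g : R * R -> cls) : Prop :=
  forall p, S p -> forall eps, 0 < eps -> exists delta, 0 < delta /\
    forall q, S q -> dist2 p q < delta -> dist3 (g p) (g q) < eps.

(* "C / R^+ is homeomorphic to the closed unit disk", for a cone C, phrased
   without choosing a slice: f : C -> D is continuous, its fibres are exactly
   the R^+-orbits (so it induces a continuous bijection C/R^+ -> D, by the
   universal property of the quotient topology), and there is a continuous
   g : D -> C with f o g = id (so the inverse D -> C/R^+ is pi o g, continuous).
   Conversely any homeomorphism C/R^+ ~ D gives such f, g, since C/R^+
   has the continuous section w |-> w / (H-coefficient) for the Kähler cone. *)
Definition cone_quotient_homeo_disk (C : cls -> Prop) : Prop :=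
  exists (f : cls -> R * R) (g : R * R -> cls),
    cont_on3 C f /\
    (forall x y, C x -> C y ->
       (f x = f y <-> exists l, 0 < l /\ y = scale l x)) /\
    (forall x, C x -> disk (f x)) /\
    cont_on2 disk g /\
    (forall p, disk p -> C (g p) /\ f (g p) = p).

From Pilot Require Import Defs.
From Stdlib Require Import Reals Lra Psatz.
Open Scope R_scope.

(* Normalizing the H-coefficient to 1, a Kähler class (a, b, c) is, up to R^+,
   the point (x, y) = (-b/a, -c/a) of the open triangle 0 < x, 0 < y, x + y < 1,
   and T <= t becomes (3 - x - y)^2 <= t (1 - x^2 - y^2).  For 7 < t < 8 this is
   a nondegenerate ellipse lying inside the triangle, so an affine change of
   coordinates maps it onto the unit disk.  Composed with the chart, this gives
   the required map; it is continuous since the chart is locally Lipschitz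
   where a > 0. *)

Lemma Rabs_le_sqrt u z : 0 <= z -> Rabs u <= sqrt (u ^ 2 + z).
Proof.
  intros Hz. rewrite <- (sqrt_pow2 (Rabs u)) by apply Rabs_pos.
  apply sqrt_le_1_alt. rewrite pow2_abs. lra.
Qed.

Lemma dist2_le_Rabs x y x' y' :
  dist2 (x, y) (x', y') <= Rabs (x - x') + Rabs (y - y').
Proof.
  unfold dist2.
  assert (0 <= Rabs (x - x')) by apply Rabs_pos.
  assert (0 <= Rabs (y - y')) by apply Rabs_pos.
  rewrite <- (sqrt_pow2 (Rabs (x - x') + Rabs (y - y'))) by lra.
  apply sqrt_le_1_alt.
  rewrite <- (pow2_abs (x - x')), <- (pow2_abs (y - y')). nra.
Qed.

Lemma Rabs_le_dist2 x y x' y' :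
  Rabs (x - x') <= dist2 (x, y) (x', y') /\ Rabs (y - y') <= dist2 (x, y) (x', y').
Proof.
  unfold dist2. split; [|rewrite Rplus_comm]; apply Rabs_le_sqrt, pow2_ge_0.
Qed.

Lemma Rabs_le_dist3 a b c a' b' c' (d := dist3 (a, b, c) (a', b', c')) :
  Rabs (a - a') <= d /\ Rabs (b - b') <= d /\ Rabs (c - c') <= d.
Proof.
  unfold d, dist3.
  assert (Hb := pow2_ge_0 (b - b')). assert (Hc := pow2_ge_0 (c - c')).
  assert (Ha := pow2_ge_0 (a - a')).
  split; [|split].
  - rewrite Rplus_assoc. apply Rabs_le_sqrt. lra.
  - replace ((a - a') ^ 2 + (b - b') ^ 2 + (c - c') ^ 2)
      with ((b - b') ^ 2 + ((a - a') ^ 2 + (c - c') ^ 2)) by ring.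
    apply Rabs_le_sqrt. lra.
  - replace ((a - a') ^ 2 + (b - b') ^ 2 + (c - c') ^ 2)
      with ((c - c') ^ 2 + ((a - a') ^ 2 + (b - b') ^ 2)) by ring.
    apply Rabs_le_sqrt. lra.
Qed.

Lemma dist3_ge0 u v : 0 <= dist3 u v.
Proof. destruct u as [[a b] c], v as [[a' b'] c']. apply sqrt_pos. Qed.

Lemma dist2_ge0 p q : 0 <= dist2 p q.
Proof. destruct p, q. apply sqrt_pos. Qed.

Definition affine2 (m11 m12 m21 m22 b1 b2 : R) (p : R * R) : R * R :=
  let '(x, y) := p in (m11 * x + m12 * y + b1, m21 * x + m22 * y + b2).

Lemma affine2_lipschitz m11 m12 m21 m22 b1 b2 p q :
  dist2 (affine2 m11 m12 m21 m22 b1 b2 p) (affine2 m11 m12 m21 m22 b1 b2 q)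
  <= (Rabs m11 + Rabs m12 + Rabs m21 + Rabs m22) * dist2 p q.
Proof.
  destruct p as [x y], q as [x' y']. unfold affine2.
  destruct (Rabs_le_dist2 x y x' y') as [Hx Hy].
  eapply Rle_trans; [apply dist2_le_Rabs|].
  replace (m11 * x + m12 * y + b1 - (m11 * x' + m12 * y' + b1))
    with (m11 * (x - x') + m12 * (y - y')) by ring.
  replace (m21 * x + m22 * y + b2 - (m21 * x' + m22 * y' + b2))
    with (m21 * (x - x') + m22 * (y - y')) by ring.
  assert (T1 := Rabs_triang (m11 * (x - x')) (m12 * (y - y'))).
  assert (T2 := Rabs_triang (m21 * (x - x')) (m22 * (y - y'))).
  rewrite !Rabs_mult in T1, T2.
  assert (A11 := Rabs_pos m11). assert (A12 := Rabs_pos m12).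
  assert (A21 := Rabs_pos m21). assert (A22 := Rabs_pos m22).
  assert (0 <= Rabs (x - x')) by apply Rabs_pos.
  assert (0 <= Rabs (y - y')) by apply Rabs_pos.
  nra.
Qed.

Lemma Rmult_lt_of_lt_div K d eps : 0 < eps -> 0 <= d -> d < eps / (Rabs K + 1) -> K * d < eps.
Proof.
  intros Heps Hd Hlt. assert (HK := Rabs_pos K). assert (HKK := Rle_abs K).
  assert (d * (Rabs K + 1) < eps).
  { apply Rmult_lt_reg_r with (/ (Rabs K + 1)); [apply Rinv_0_lt_compat; lra|].
    replace (d * (Rabs K + 1) * / (Rabs K + 1)) with d by (field; lra). exact Hlt. }
  nra.
Qed.

Lemma cont_on2_of_lipschitz (S : R * R -> Prop) (g : R * R -> cls) (K : R) :
  (forall p q, dist3 (g p) (g q) <= K * dist2 p q) -> cont_on2 S g.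
Proof.
  intros HK p _ eps Heps.
  exists (eps / (Rabs K + 1)). split; [apply Rdiv_lt_0_compat; assert (H := Rabs_pos K); lra|].
  intros q _ Hpq.
  eapply Rle_lt_trans; [apply HK|]. apply Rmult_lt_of_lt_div; auto using dist2_ge0.
Qed.

Definition locally_lipschitz3 (S : cls -> Prop) (h : cls -> R * R) : Prop :=
  forall u, S u -> exists r K, 0 < r /\
    forall v, S v -> dist3 u v < r -> dist2 (h u) (h v) <= K * dist3 u v.

Lemma cont_on3_of_locally_lipschitz S h : locally_lipschitz3 S h -> cont_on3 S h.
Proof.
  intros Hh u Su eps Heps.
  destruct (Hh u Su) as (r & K & Hr & HK).
  exists (Rmin r (eps / (Rabs K + 1))).
  split; [apply Rmin_glb_lt; [|apply Rdiv_lt_0_compat; assert (H := Rabs_pos K)]; lra|].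
  intros v Sv Huv.
  assert (Hr' := Rmin_l r (eps / (Rabs K + 1))).
  assert (He' := Rmin_r r (eps / (Rabs K + 1))).
  eapply Rle_lt_trans; [apply HK; auto; lra|].
  apply Rmult_lt_of_lt_div; auto using dist3_ge0. lra.
Qed.

Lemma locally_lipschitz3_comp S h (F : R * R -> R * R) K :
  0 <= K -> (forall p q, dist2 (F p) (F q) <= K * dist2 p q) ->
  locally_lipschitz3 S h -> locally_lipschitz3 S (fun u => F (h u)).
Proof.
  intros HK0 HF Hh u Su.
  destruct (Hh u Su) as (r & K' & Hr & HK').
  exists r, (K * K'). split; [exact Hr|].
  intros v Sv Huv.
  eapply Rle_trans; [apply HF|].
  rewrite Rmult_assoc. apply Rmult_le_compat_l; auto.
Qed.

Lemma Rdiv_local_lipschitz a n a' n' d :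
  0 < a -> Rabs (a' - a) <= d -> Rabs (n' - n) <= d -> d < a / 2 ->
  Rabs (n' / a' - n / a) <= 2 * (a + Rabs n) / a ^ 2 * d.
Proof.
  intros Ha Hda Hdn Hd.
  assert (Ha' : a / 2 < a').
  { destruct (Rabs_def2 _ _ (Rle_lt_trans _ _ _ Hda Hd)). lra. }
  set (q := n' / a' - n / a).
  assert (Eq : q * (a * a') = (n' - n) * a - n * (a' - a)) by (unfold q; field; lra).
  assert (Hnum : Rabs q * (a * a') <= (a + Rabs n) * d).
  { rewrite <- (Rabs_pos_eq (a * a')) by nra. rewrite <- Rabs_mult, Eq.
    eapply Rle_trans; [apply Rabs_triang|]. rewrite Rabs_Ropp, !Rabs_mult.
    rewrite (Rabs_pos_eq a) by lra.
    assert (0 <= Rabs n) by apply Rabs_pos. nra. }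
  assert (Hq := Rabs_pos q).
  apply Rmult_le_reg_r with (a ^ 2 / 2); [nra|].
  replace (2 * (a + Rabs n) / a ^ 2 * d * (a ^ 2 / 2)) with ((a + Rabs n) * d) by (field; lra).
  assert (0 <= Rabs q * (a * (a' - a / 2))) by (apply Rmult_le_pos; nra).
  nra.
Qed.

(* The affine chart a = 1 of the projectivized cone; [lift] is its section. *)
Definition chart (w : cls) : R * R := let '(a, b, c) := w in (- b / a, - c / a).

Definition lift (p : R * R) : cls := let '(x, y) := p in (1, - x, - y).

Lemma chart_locally_lipschitz (S : cls -> Prop) :
  (forall a b c, S (a, b, c) -> 0 < a) -> locally_lipschitz3 S chart.
Proof.
  intros HS [[a b] c] Su. specialize (HS a b c Su).
  exists (a / 2), (2 * (a + Rabs b) / a ^ 2 + 2 * (a + Rabs c) / a ^ 2).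
  split; [lra|].
  intros [[a' b'] c'] _ Huv. unfold chart.
  destruct (Rabs_le_dist3 a b c a' b' c') as (Ha & Hb & Hc).
  rewrite Rabs_minus_sym in Ha, Hb, Hc.
  eapply Rle_trans; [apply dist2_le_Rabs|].
  rewrite Rmult_plus_distr_r.
  rewrite <- (Rabs_Ropp b), <- (Rabs_Ropp c).
  apply Rplus_le_compat; rewrite Rabs_minus_sym; apply Rdiv_local_lipschitz; auto;
    [replace (- b' - - b) with (- (b' - b)) by ring
    |replace (- c' - - c) with (- (c' - c)) by ring]; rewrite Rabs_Ropp; auto.
Qed.

Lemma dist3_lift p q : dist3 (lift p) (lift q) = dist2 p q.
Proof.
  destruct p as [x y], q as [x' y']. unfold lift, dist3, dist2. f_equal. ring.
Qed.

Lemma chart_lift p : chart (lift p) = p.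
Proof. destruct p as [x y]. unfold lift, chart. f_equal; field. Qed.

Lemma chart_scale l w : l <> 0 -> chart (scale l w) = chart w.
Proof.
  destruct w as [[a b] c]. intros Hl. unfold scale, chart.
  destruct (Req_dec a 0) as [->|Ha].
  - rewrite Rmult_0_r, !Rdiv_0_r. reflexivity.
  - f_equal; field; auto.
Qed.

Lemma scale_lift_chart a b c : a <> 0 -> (a, b, c) = scale a (lift (chart (a, b, c))).
Proof. intros Ha. unfold chart, lift, scale. f_equal; [f_equal|]; field; auto. Qed.

Lemma scale_scale l m w : scale l (scale m w) = scale (l * m) w.
Proof. destruct w as [[a b] c]. unfold scale. f_equal; [f_equal|]; ring. Qed.

Lemma chart_eq_iff a b c a' b' c' : 0 < a -> 0 < a' ->
  chart (a, b, c) = chart (a', b', c') <->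
  exists l, 0 < l /\ (a', b', c') = scale l (a, b, c).
Proof.
  intros Ha Ha'. split.
  - intros E. exists (a' / a). split; [apply Rdiv_lt_0_compat; auto|].
    rewrite (scale_lift_chart a b c), (scale_lift_chart a' b' c'), E by lra.
    rewrite scale_scale. f_equal. field. lra.
  - intros (l & Hl & ->). symmetry. apply chart_scale. lra.
Qed.

Lemma dot_scale_l l u v : dot (scale l u) v = l * dot u v.
Proof. destruct u as [[a b] c], v as [[a' b'] c']. unfold scale, dot. ring. Qed.

Lemma dot_scale_r l u v : dot u (scale l v) = l * dot u v.
Proof. destruct u as [[a b] c], v as [[a' b'] c']. unfold scale, dot. ring. Qed.

Lemma kahler_scale l w : 0 < l -> kahler (scale l w) <-> kahler w.
Proof.
  intros Hl. unfold kahler. rewrite !dot_scale_l.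
  assert (Hpos : forall x, 0 < l * x <-> 0 < x).
  { intros x. split; intros Hx; [nra | apply Rmult_lt_0_compat; auto]. }
  rewrite !Hpos. tauto.
Qed.

Lemma Tfun_scale l w : l <> 0 -> Tfun (scale l w) = Tfun w.
Proof.
  intros Hl. unfold Tfun. rewrite dot_scale_r, !dot_scale_l, dot_scale_r.
  unfold Rdiv. rewrite !Rinv_mult.
  replace ((l * dot Defs.c1 w) ^ 2 * (/ l * (/ l * / dot w w)))
    with (dot Defs.c1 w ^ 2 * / dot w w * ((l * / l) * (l * / l))) by ring.
  rewrite Rinv_r by auto. ring.
Qed.

Lemma Ycone_scale t l w : 0 < l -> Ycone t (scale l w) <-> Ycone t w.
Proof.
  intros Hl. unfold Ycone. rewrite kahler_scale, Tfun_scale by lra. tauto.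
Qed.

Lemma kahler_H_pos a b c : kahler (a, b, c) -> 0 < a.
Proof. unfold kahler, dot, E1, E2, Lline. cbn. lra. Qed.

Lemma kahler_lift x y : kahler (lift (x, y)) <-> 0 < x /\ 0 < y /\ x + y < 1.
Proof. unfold kahler, lift, dot, E1, E2, Lline. cbn. split; intros; lra. Qed.

(* [(c1 . W)^2 - t W^2] at [W = lift (x, y)]. *)
Definition quadric (t : R) (p : R * R) : R :=
  let '(x, y) := p in t * (x ^ 2 + y ^ 2) + (3 - x - y) ^ 2 - t.

Lemma Tfun_lift x y : Tfun (lift (x, y)) = (3 - x - y) ^ 2 / (1 - x ^ 2 - y ^ 2).
Proof. unfold Tfun, lift, dot, Defs.c1. cbn. f_equal; [f_equal|]; ring. Qed.

Lemma quadric_sym t x y : quadric t (x, y) = quadric t (y, x).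
Proof. unfold quadric. ring. Qed.

Lemma quadric_nonpos_fst t x y : 0 < t < 8 -> quadric t (x, y) <= 0 -> 0 < x.
Proof.
  unfold quadric. intros Ht Hq.
  destruct (Rle_or_lt x 0) as [Hx|Hx]; auto. exfalso.
  assert (E : (t + 1) * (t * (x ^ 2 + y ^ 2) + (3 - x - y) ^ 2 - t) =
     ((t + 1) * y - (3 - x)) ^ 2 + t * ((t + 2) * x ^ 2 - 6 * x + 8 - t)) by ring.
  assert (0 <= ((t + 1) * y - (3 - x)) ^ 2) by apply pow2_ge_0.
  assert (0 <= (t + 2) * x ^ 2) by (apply Rmult_le_pos; [lra|apply pow2_ge_0]).
  assert (0 < t * ((t + 2) * x ^ 2 - 6 * x + 8 - t)) by (apply Rmult_lt_0_compat; lra).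
  nra.
Qed.

Lemma quadric_nonpos_sum t x y : 4 <= t < 8 -> quadric t (x, y) <= 0 -> x + y < 1.
Proof.
  unfold quadric. intros Ht Hq.
  destruct (Rle_or_lt 1 (x + y)) as [Hs|Hs]; auto. exfalso.
  assert (E : 2 * (t * (x ^ 2 + y ^ 2) + (3 - x - y) ^ 2 - t) =
      (x + y - 1) * ((t + 2) * (x + y - 1) + 2 * t - 8) + (8 - t) + t * (x - y) ^ 2) by ring.
  assert (0 <= (x + y - 1) * ((t + 2) * (x + y - 1) + 2 * t - 8)) by (apply Rmult_le_pos; nra).
  assert (0 <= t * (x - y) ^ 2) by (apply Rmult_le_pos; [lra|apply pow2_ge_0]).
  lra.
Qed.

Lemma Ycone_lift_iff t x y : 4 <= t < 8 ->
  Ycone t (lift (x, y)) <-> quadric t (x, y) <= 0.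
Proof.
  intros Ht. unfold Ycone. rewrite kahler_lift, Tfun_lift.
  split.
  - intros ((Hx & Hy & Hxy) & HT).
    assert (Hden : 0 < 1 - x ^ 2 - y ^ 2) by nra.
    apply Rmult_le_compat_r with (r := 1 - x ^ 2 - y ^ 2) in HT; [|lra].
    unfold Rdiv in HT. rewrite Rmult_assoc, Rinv_l in HT by lra.
    unfold quadric. lra.
  - intros Hq.
    assert (Htri : 0 < x /\ 0 < y /\ x + y < 1).
    { split; [|split].
      - apply (quadric_nonpos_fst t x y); [lra | auto].
      - rewrite quadric_sym in Hq. apply (quadric_nonpos_fst t y x); [lra | auto].
      - apply (quadric_nonpos_sum t); auto. }
    split; auto.
    destruct Htri as (Hx & Hy & Hxy).
    assert (Hden : 0 < 1 - x ^ 2 - y ^ 2) by nra.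
    apply Rmult_le_reg_r with (1 - x ^ 2 - y ^ 2); auto.
    unfold Rdiv. rewrite Rmult_assoc, Rinv_l by lra.
    unfold quadric in Hq. lra.
Qed.

(* Completing the square in s = x + y and d = x - y:
   [quadric t (x, y) = (t + 2)/2 (s - ell_s t)^2 + t/2 d^2 - ell_r t]. *)
Definition ell_r (t : R) : R := t * (t - 7) / (t + 2).
Definition ell_s (t : R) : R := 6 / (t + 2).
Definition ell_a (t : R) : R := sqrt ((t + 2) / (2 * ell_r t)).
Definition ell_b (t : R) : R := sqrt (t / (2 * ell_r t)).

Definition disk_coords (t : R) : R * R -> R * R :=
  affine2 (ell_a t) (ell_a t) (ell_b t) (- ell_b t) (- ell_a t * ell_s t) 0.

Definition disk_coords_inv (t : R) : R * R -> R * R :=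
  affine2 (/ (2 * ell_a t)) (/ (2 * ell_b t)) (/ (2 * ell_a t)) (- / (2 * ell_b t))
    (ell_s t / 2) (ell_s t / 2).

Lemma ell_consts t : 7 < t ->
  0 < ell_r t /\ 0 < ell_a t /\ 0 < ell_b t /\
  ell_a t ^ 2 = (t + 2) / (2 * ell_r t) /\ ell_b t ^ 2 = t / (2 * ell_r t).
Proof.
  intros Ht. assert (Hr : 0 < ell_r t) by (unfold ell_r; apply Rdiv_lt_0_compat; nra).
  assert (0 < (t + 2) / (2 * ell_r t)) by (apply Rdiv_lt_0_compat; lra).
  assert (0 < t / (2 * ell_r t)) by (apply Rdiv_lt_0_compat; lra).
  unfold ell_a, ell_b. repeat split; auto; try apply sqrt_lt_R0; auto; apply pow2_sqrt; lra.
Qed.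

Lemma disk_disk_coords t p : 7 < t -> disk (disk_coords t p) <-> quadric t p <= 0.
Proof.
  intros Ht. destruct (ell_consts t Ht) as (Hr & Ha & Hb & Ha2 & Hb2).
  destruct p as [x y]. unfold disk, disk_coords, affine2.
  replace ((ell_a t * x + ell_a t * y + - ell_a t * ell_s t) ^ 2 +
           (ell_b t * x + - ell_b t * y + 0) ^ 2)
    with (quadric t (x, y) / ell_r t + 1).
  2:{ replace ((ell_a t * x + ell_a t * y + - ell_a t * ell_s t) ^ 2 +
               (ell_b t * x + - ell_b t * y + 0) ^ 2)
        with (ell_a t ^ 2 * (x + y - ell_s t) ^ 2 + ell_b t ^ 2 * (x - y) ^ 2) by ring.
      rewrite Ha2, Hb2. unfold quadric, ell_s, ell_r in *. field. split; lra. }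
  split; intros H.
  - apply Rmult_le_reg_r with (/ ell_r t); [apply Rinv_0_lt_compat; auto|]. lra.
  - assert (0 < / ell_r t) by (apply Rinv_0_lt_compat; auto).
    unfold Rdiv. nra.
Qed.

Lemma disk_coordsK t p : 7 < t -> disk_coords_inv t (disk_coords t p) = p.
Proof.
  intros Ht. destruct (ell_consts t Ht) as (_ & Ha & Hb & _).
  destruct p as [x y]. unfold disk_coords, disk_coords_inv, affine2.
  f_equal; field; lra.
Qed.

Lemma disk_coords_invK t p : 7 < t -> disk_coords t (disk_coords_inv t p) = p.
Proof.
  intros Ht. destruct (ell_consts t Ht) as (_ & Ha & Hb & _).
  destruct p as [u v]. unfold disk_coords, disk_coords_inv, affine2.
  f_equal; field; lra.
Qed.

Theorem lemma1 (t : R) (ht : 7 < t < 8) :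
  cone_quotient_homeo_disk (Ycone t).
Proof.
  assert (Ht : 7 < t) by lra.
  exists (fun w => disk_coords t (chart w)), (fun p => lift (disk_coords_inv t p)).
  split; [|split; [|split; [|split]]].
  - apply cont_on3_of_locally_lipschitz.
    eapply locally_lipschitz3_comp; [|apply affine2_lipschitz|].
    + assert (H := Rabs_pos (ell_a t)). assert (H' := Rabs_pos (ell_b t)).
      assert (H'' := Rabs_pos (- ell_b t)). lra.
    + apply chart_locally_lipschitz. intros a b c [Hk _]. exact (kahler_H_pos a b c Hk).
  - intros [[a b] c] [[a' b'] c'] [Hk _] [Hk' _].
    rewrite <- chart_eq_iff by eauto using kahler_H_pos.
    split; [|congruence].
    intros E. rewrite <- (disk_coordsK t (chart (a, b, c))), E by auto.
    apply disk_coordsK; auto.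
  - intros [[a b] c] Hw.
    assert (Ha := kahler_H_pos a b c (proj1 Hw)).
    rewrite (scale_lift_chart a b c), Ycone_scale in Hw by lra.
    destruct (chart (a, b, c)) as [x y].
    apply disk_disk_coords, Ycone_lift_iff; auto; lra.
  - eapply cont_on2_of_lipschitz. intros p q. rewrite dist3_lift. apply affine2_lipschitz.
  - intros p Hp. rewrite chart_lift, disk_coords_invK by auto. split; auto.
    destruct (disk_coords_inv t p) as [x y] eqn:E.
    apply Ycone_lift_iff; [lra|]. apply disk_disk_coords; auto.
    rewrite <- E, disk_coords_invK; auto.
Qed.
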